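(* Let $n=3$ and $k\ge 2$. Let $A$ be a connectivity class of external positions which is not the frame class, and let $\pi$ be an even permutation of $A$. Then there exists a combination $g$ such that $g(p)=\pi(p)$ for all $p\in A$ and $g(q,l)=(q,l)$ for every external position $q\notin A$ and every $l\in B(q)$.
   Context: Here $n=3$, $k\ge2$, $M=\{0,\dots,k-1\}$. Positions are $p\in M^3$; $B(p)=\{i:p_i\in\{0,k-1\}\}$, $p$ external if $B(p)\ne\emptyset$ (internal positions are disregarded). For distinct $i,j$, $\psi_{i,j}:M^3\to M^3$ is $(\psi_{i,j}p)_i=k-1-p_j$, $(\psi_{i,j}p)_j=p_i$, the remaining coordinate unchanged; $\tau_{ij}$ is the transposition of $i,j$. A move is given by distinct $i,j$ and a constant $c\in M$ for the remaining coordinate: it applies $\psi_{i,j}$ to all positions whose remaining coordinate equals $c$ and fixes the others; it acts on $X=\{(p,l): p \text{ external}, l\in B(p)\}$ (orientation faces of cubies) by $(p,l)\mapsto(\psi_{i,j}(p),\tau_{ij}(l))$ for $p$ in its layer, fixing other pairs. A combination is a finite sequence of moves acting by composition. Connectivity classes are orbits of external positions under combinations. For odd $k$ the frame class is the set of positions with exactly one coordinate in $\{0,k-1\}$ and the others equal to $(k-1)/2$; for even $k$ there is none. *)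

From mathcomp Require Import all_boot all_fingroup.
Set Implicit Arguments. Unset Strict Implicit. Unset Printing Implicit Defensive.

(* Positions of the n = 3 cube: p in M^3 with M = {0,...,k-1} = 'I_k. *)
Definition pos (k : nat) := {ffun 'I_3 -> 'I_k}.

Definition B k (p : pos k) : {set 'I_3} :=
  [set i | (val (p i) == 0) || (val (p i) == k.-1)].

Definition external k (p : pos k) : bool := B p != set0.

(* psi_{i,j}: (psi p)_i = k-1-p_j, (psi p)_j = p_i, remaining coord unchanged.
   rev_ord x has value k - x.+1 = k-1-x. *)
Definition psi k (i j : 'I_3) (p : pos k) : pos k :=
  [ffun l => if l == i then rev_ord (p j) else if l == j then p i else p l].

Definition third (i j : 'I_3) : 'I_3 := inord (3 - i - j).

Definition move k := ('I_3 * 'I_3 * 'I_k)%type.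

Definition valid_move k (m : move k) : bool := m.1.1 != m.1.2.

Definition in_layer k (m : move k) (p : pos k) : bool :=
  p (third m.1.1 m.1.2) == m.2.

Definition move_pos k (m : move k) (p : pos k) : pos k :=
  if in_layer m p then psi m.1.1 m.1.2 p else p.

(* action on orientation pairs (p, l) *)
Definition move_X k (m : move k) (x : pos k * 'I_3) : pos k * 'I_3 :=
  if in_layer m x.1 then (psi m.1.1 m.1.2 x.1, tperm m.1.1 m.1.2 x.2) else x.

Definition combination k (g : seq (move k)) : bool := all (@valid_move k) g.

Definition act_pos k (g : seq (move k)) (p : pos k) : pos k :=
  foldl (fun q m => move_pos m q) p g.

Definition act_X k (g : seq (move k)) (x : pos k * 'I_3) : pos k * 'I_3 :=
  foldl (fun y m => move_X m y) x g.

Definition conn_class k (A : {set pos k}) : Prop :=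
  exists p0 : pos k, external p0 /\
    forall q, q \in A <-> exists g, combination g /\ act_pos g p0 = q.

Definition frame k : {set pos k} :=
  [set p | (#|B p| == 1) && [forall i, (i \notin B p) ==> (val (p i) == k.-1./2)]].

From mathcomp Require Import all_boot all_fingroup zify.
Set Implicit Arguments. Unset Strict Implicit. Unset Printing Implicit Defensive.

Local Open Scope group_scope.

(* Call a permutation of A realizable when a combination induces it on A while fixing
   every orientation face (q, l) with q outside A; realizable permutations form a group.
   If a combination g moves only positions in a set Sg, and h only positions in a set Sh
   with Sg and Sh meeting in the single position P, then the commutator g h g^-1 h^-1
   cycles P, h^-1 P, g^-1 P and fixes everything else, in particular every face outside A.
   Taking for g a layer turn through P and for h a suitably conjugated turn, every move
   leaving P yields such a 3-cycle, provided P has at most one middle coordinate; a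
   position of A with two middle coordinates forces A to be the frame class.  As A is
   connected by moves, the 3-cycles propagate: a group containing Alt(S) and a 3-cycle
   with two points in S (or one point in S, when |S| >= 3) contains all 3-cycles on a
   set one point larger, hence eventually Alt(A). *)

(** * Three-cycles and alternating groups *)

Section ThreeCycles.
Variable T : finType.

Definition cycle3 (a b c : T) : {perm T} := tperm a b * tperm a c.

Variables a b c : T.
Hypotheses (ab : a != b) (ac : a != c) (bc : b != c).

Lemma cycle3_a : cycle3 a b c a = b.
Proof. by rewrite permM tpermL (tpermD ab) // eq_sym. Qed.

Lemma cycle3_b : cycle3 a b c b = c.
Proof. by rewrite permM tpermR tpermL. Qed.

Lemma cycle3_c : cycle3 a b c c = a.
Proof. by rewrite permM (tpermD ac bc) tpermR. Qed.

Lemma cycle3_id x : x != a -> x != b -> x != c -> cycle3 a b c x = x.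
Proof. by move=> xa xb xc; rewrite permM !tpermD // eq_sym. Qed.

Lemma cycle3_moved x : cycle3 a b c x != x -> [|| x == a, x == b | x == c].
Proof. by apply: contraR; rewrite !negb_or => /and3P[*]; rewrite cycle3_id. Qed.

Lemma cycle3P (s : {perm T}) : s a = b -> s b = c -> s c = a ->
  (forall x, x != a -> x != b -> x != c -> s x = x) -> s = cycle3 a b c.
Proof.
move=> sa sb sc sx; apply/permP => x.
case: (eqVneq x a) => [->|xa]; first by rewrite sa cycle3_a.
case: (eqVneq x b) => [->|xb]; first by rewrite sb cycle3_b.
case: (eqVneq x c) => [->|xc]; first by rewrite sc cycle3_c.
by rewrite sx // cycle3_id.
Qed.

Lemma odd_cycle3 : odd_perm (cycle3 a b c) = false.
Proof. by rewrite odd_permM !odd_tperm ab ac. Qed.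

Lemma perm_on_cycle3 (S : {set T}) : a \in S -> b \in S -> c \in S -> perm_on S (cycle3 a b c).
Proof. by move=> aS bS cS; apply/subsetP => x /cycle3_moved /or3P[] /eqP->. Qed.

End ThreeCycles.

Lemma cycle3_rot (T : finType) (a b c : T) :
  a != b -> a != c -> b != c -> cycle3 b c a = cycle3 a b c.
Proof.
move=> ab ac bc.
have ba : b != a by rewrite eq_sym.
have ca : c != a by rewrite eq_sym.
apply: (cycle3P ab ac bc) => [||| x xa xb xc].
all: by rewrite ?cycle3_a ?cycle3_b ?cycle3_c ?cycle3_id.
Qed.

Lemma cycle3V (T : finType) (a b c : T) :
  a != b -> a != c -> b != c -> (cycle3 a b c)^-1 = cycle3 a c b.
Proof.
move=> ab ac bc.
have cb : c != b by rewrite eq_sym.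
apply: (cycle3P ac ab cb) => [||| x xa xc xb]; apply: (canLR (permK _)).
all: by rewrite ?cycle3_a ?cycle3_b ?cycle3_c ?cycle3_id.
Qed.

Lemma cycle3J (T : finType) (a b c : T) (s : {perm T}) :
  cycle3 a b c ^ s = cycle3 (s a) (s b) (s c).
Proof. by rewrite /cycle3 conjMg !tpermJ. Qed.

Section AlternatingClosure.
Variables (T : finType) (G : {perm T} -> Prop).
Hypotheses (G1 : G 1) (GM : forall s t, G s -> G t -> G (s * t))
  (GV : forall s, G s -> G s^-1).

Lemma GJ s t : G s -> G t -> G (s ^ t).
Proof. by move=> Gs Gt; rewrite conjgE; apply: GM (GV Gt) (GM Gs Gt). Qed.

Definition cycles3_in (S : {set T}) := forall a b c, a \in S -> b \in S -> c \in S ->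
  a != b -> a != c -> b != c -> G (cycle3 a b c).

Definition alt_in (S : {set T}) := forall s, perm_on S s -> ~~ odd_perm s -> G s.

Lemma alt_in_small (S : {set T}) : #|S| <= 2 -> alt_in S.
Proof.
move=> S2 s sS even_s; suff -> : s = 1 by [].
apply/permP => x; rewrite perm1; apply/eqP/negPn/negP => sx.
have xS : x \in S by apply: (subsetP sS); rewrite inE.
have sxS : s x \in S by rewrite perm_closed.
have Sx : S = [set x; s x].
  apply/eqP; rewrite eq_sym eqEcard cards2 (eq_sym x) sx S2 andbT.
  by apply/subsetP => y /set2P[]->.
have ssx : s (s x) = x.
  have : s (s x) \in [set x; s x] by rewrite -Sx !perm_closed.
  by case/set2P => // /perm_inj /eqP; rewrite (negbTE sx).
suff st : s = tperm x (s x) by move: even_s; rewrite st odd_tperm eq_sym sx.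
apply/permP => y; case: tpermP => [->|->|yx ysx] //.
by rewrite (out_perm sS) // Sx; apply/set2P => -[].
Qed.

Lemma alt_in_of_cycles3 (S : {set T}) : cycles3_in S -> alt_in S.
Proof.
move=> HS s; have [n] := ubnP #|[set x | s x != x]|.
elim: n s => // n IH s /ltnSE le_sn sS even_s.
have sSx x : s x != x -> x \in S by move=> sx; apply: (subsetP sS); rewrite inE.
have moved_s x : s x != x -> s (s x) != s x by apply: contra => /eqP/perm_inj->.
(* Composing s with a 3-cycle on three points it moves can fix one of them. *)
have shrink a b c x : a != b -> a != c -> b != c -> s a != a -> s b != b -> s c != c ->
    s x != x -> (s * cycle3 a b c) x = x -> G s.
  move=> ab ac bc sa sb sc sx scx.
  have Gc := HS _ _ _ (sSx _ sa) (sSx _ sb) (sSx _ sc) ab ac bc.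
  rewrite -(mulgK (cycle3 a b c) s); apply: GM (GV Gc); apply: IH.
  - apply: leq_trans le_sn; apply: proper_card; apply/properP; split.
      apply/subsetP => y; rewrite !inE; apply: contraNN => /eqP sy.
      have ne_y z : s z != z -> y != z by apply: contraNneq => <-; rewrite sy.
      by rewrite permM sy cycle3_id ?ne_y.
    by exists x; rewrite !inE ?scx ?eqxx.
  - by apply: perm_onM sS _; apply: perm_on_cycle3 => //; apply: sSx.
  - by rewrite odd_permM odd_cycle3 // addbF.
have [a sa | s1] := pickP (fun x => s x != x); last first.
  by suff -> : s = 1 by []; apply/permP => x; move/negbFE/eqP: (s1 x) ->; rewrite perm1.
have sb := moved_s _ sa; have ab : a != s a by rewrite eq_sym.
have [ssa | ssa] := eqVneq (s (s a)) a; last first.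
  have ac : a != s (s a) by rewrite eq_sym.
  by apply: (shrink a (s (s a)) (s a) a) => //; rewrite ?moved_s // permM cycle3_c.
have [d /and3P[sd da db] | s2] := pickP (fun x => [&& s x != x, x != a & x != s a]).
  apply: (shrink (s a) a d a) => //; rewrite 1?eq_sym //.
  by rewrite permM cycle3_a // eq_sym.
suff st : s = tperm a (s a) by move: even_s; rewrite st odd_tperm ab.
apply/permP => x; case: tpermP => [->|->|xa xsa] //.
by move: (s2 x); rewrite (introN eqP xa) (introN eqP xsa) !andbT => /negbFE/eqP.
Qed.

Lemma cycles3_in_setU1 (S : {set T}) x y z : alt_in S -> G (cycle3 x y z) ->
  x \notin S -> y \in S -> z \in S -> y != z -> cycles3_in (x |: S).
Proof.
move=> GS Gxyz xS yS zS yz.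
have tpermS u v : u \in S -> v \in S -> perm_on S (tperm u v).
  by move=> uS vS; apply: subset_trans (tperm_on u v) _; apply/subsetP => w /set2P[]->.
have Gconj s : perm_on S s -> ~~ odd_perm s -> G (cycle3 x (s y) (s z)).
  by move=> sS even_s; rewrite -[x](out_perm sS xS) -cycle3J; apply: GJ => //; apply: GS.
(* Conjugating (x y z) by an even permutation of S gives (x p q) or (x q p) = (x p q)^-1. *)
have Gx p q : p \in S -> q \in S -> p != q -> G (cycle3 x p q).
  move=> pS qS pq.
  have [xp xq] : x != p /\ x != q by split; apply: contraNneq xS => ->.
  have [s [sS sy sz]] : exists s, [/\ perm_on S s, s y = p & s z = q].
    exists (tperm y p * tperm (tperm y p z) q); split.
    - by apply: perm_onM (tpermS _ _ yS pS) (tpermS _ _ _ qS); rewrite perm_closed ?tpermS.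
    - rewrite permM tpermL tpermD 1?eq_sym //.
      by rewrite -[X in X != _](tpermL y p) (inj_eq perm_inj).
    - by rewrite permM tpermL.
  have [odd_s | even_s] := boolP (odd_perm s); last by have := Gconj s sS even_s; rewrite sy sz.
  have qp : q != p by rewrite eq_sym.
  rewrite -(cycle3V xq xp qp); apply: GV.
  have := Gconj (s * tperm p q); rewrite !permM sy sz tpermL tpermR; apply.
  - exact: perm_onM sS (tpermS _ _ pS qS).
  - by rewrite odd_permM odd_tperm pq odd_s.
have inS w : w \in x |: S -> w != x -> w \in S by case/setU1P => // ->; rewrite eqxx.
move=> a b c aS bS cS ab ac bc.
have [ea | ax] := eqVneq a x.
  by subst a; apply: Gx (inS _ bS _) (inS _ cS _) bc; rewrite eq_sym.
have [eb | bx] := eqVneq b x.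
  subst b; rewrite -cycle3_rot //.
  by apply: Gx (inS _ cS _) (inS _ aS ax) _; rewrite eq_sym.
have [ec | cx] := eqVneq c x.
  have [xa xb] : x != a /\ x != b by rewrite !(eq_sym x).
  subst c; rewrite (cycle3_rot xa xb ab).
  exact: Gx (inS _ aS ax) (inS _ bS bx) ab.
by apply: GS; [apply: perm_on_cycle3; rewrite ?inS | rewrite odd_cycle3].
Qed.

Lemma cycles3_in_setU1_out (S : {set T}) x y z : alt_in S -> G (cycle3 x y z) ->
  x \notin S -> y \in S -> z \notin S -> x != z -> 2 < #|S| -> cycles3_in (z |: S).
Proof.
move=> GS Gxyz xS yS zS xz S3.
have xy : x != y by apply: contraNneq xS => ->.
have yz : y != z by apply: contraNneq zS => <-.
have : 1 < #|S :\ y| by move: S3; rewrite (cardsD1 y) yS.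
case/card_gt1P => a [b [/setD1P[ay aS] /setD1P[by' bS] ab]].
have fixed w : w \in S -> w != y -> cycle3 x y z w = w.
  by move=> wS wy; rewrite cycle3_id //; [apply: contraTneq wS => -> | apply: contraTneq wS => ->].
have Gzab : G (cycle3 z a b).
  rewrite -(@cycle3_b _ x y z) -(fixed a) // -(fixed b) // -cycle3J.
  by apply: GJ Gxyz; apply: GS; [apply: perm_on_cycle3 | rewrite odd_cycle3]; rewrite 1?eq_sym.
by apply: (cycles3_in_setU1 GS Gzab) => //; apply: contraNneq zS => ->.
Qed.

Variables (A : {set T}) (E : T -> T -> Prop).
Hypotheses (E_closed : forall x y, x \in A -> E x y -> y \in A)
  (E_leave : forall S : {set T}, S \subset A -> S != set0 -> ~~ (A \subset S) ->
     exists x y, [/\ x \in S, y \notin S & E x y])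
  (E_cycle3 : forall x y, x \in A -> E x y -> x != y ->
     exists u, [/\ u \in A, u != x, u != y & G (cycle3 x u y)]).

Lemma alt_in_grow (S : {set T}) : S \subset A -> 2 < #|S| -> alt_in S -> alt_in A.
Proof.
have [n] := ubnP #|A :\: S|; elim: n S => // n IH S /ltnSE leAS SA S3 GS.
have [AS | nAS] := boolP (A \subset S).
  by move=> s sA; apply: GS; apply: subset_trans sA AS.
have S0 : S != set0 by rewrite -card_gt0 (ltn_trans _ S3).
have [x [y [xS yS Exy]]] := E_leave SA S0 nAS.
have xA := subsetP SA x xS; have yA := E_closed xA Exy.
have xy : x != y by apply: contraNneq yS => <-.
have [u [uA ux uy Gxuy]] := E_cycle3 xA Exy xy.
have Gyxu : G (cycle3 y x u) by rewrite -cycle3_rot // eq_sym.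
have grow_by v : v \in A -> v \notin S -> cycles3_in (v |: S) -> alt_in A.
  move=> vA vS Gv; apply: (IH (v |: S)).
  - apply: leq_trans (proper_card _) leAS; apply/properP; split.
      by apply/subsetP => q; rewrite !inE => /andP[/norP[_ ->] ->].
    by exists v; rewrite !inE ?eqxx ?vA ?vS.
  - by rewrite subUset sub1set vA.
  - by rewrite cardsU1 vS (leq_trans S3).
  - exact: alt_in_of_cycles3.
have [uS | uS] := boolP (u \in S).
  by apply: (grow_by y) => //; apply: (cycles3_in_setU1 GS Gyxu); rewrite // eq_sym.
by apply: (grow_by u) => //; apply: (cycles3_in_setU1_out GS Gyxu); rewrite // eq_sym.
Qed.

Theorem alt_in_connected : alt_in A.
Proof.
have [A2 | A3] := leqP #|A| 2; first exact: alt_in_small.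
have [p0 p0A] : exists p0, p0 \in A by apply/card_gt0P; apply: ltn_trans A3.
have nA1 : ~~ (A \subset [set p0]).
  by apply: contraTN A3 => /subset_leq_card; rewrite cards1; lia.
have S0 : [set p0] != set0 by apply/set0Pn; exists p0; rewrite set11.
have p0S : [set p0] \subset A by rewrite sub1set.
have [x [y [/set1P-> yS Ey]]] := E_leave p0S S0 nA1.
have p0y : p0 != y by rewrite eq_sym -in_set1.
have [u [uA up0 uy Gp0uy]] := E_cycle3 p0A Ey p0y.
apply: (alt_in_grow (S := p0 |: [set u; y])).
- by apply/subsetP => q /setU1P[-> | /set2P[]->] //; apply: E_closed Ey.
- apply/card_gt2P; exists p0, u, y; split; first by rewrite !inE !eqxx ?orbT.
  by split; rewrite // eq_sym.
- apply/alt_in_of_cycles3/(cycles3_in_setU1 _ Gp0uy); rewrite ?set21 ?set22 //.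
    by apply: alt_in_small; rewrite cards2 ltnS leq_b1.
  by rewrite !inE negb_or eq_sym up0 p0y.
Qed.

End AlternatingClosure.

(** * Commutators of permutations with almost disjoint supports *)

Lemma support_stable (T : eqType) (f f' : T -> T) (S : pred T) :
  cancel f f' -> cancel f' f -> (forall y, ~~ S y -> f y = y) ->
  [/\ forall y, S y -> S (f y), forall y, S y -> S (f' y) & forall y, ~~ S y -> f' y = y].
Proof.
move=> fK f'K f_out; have f'_out y : ~~ S y -> f' y = y by move/f_out => {1}<-; rewrite fK.
split=> [y Sy | y Sy | //]; apply/negPn/negP => nS.
- by move: (f_out _ nS) => /(can_inj fK) fy; rewrite fy Sy in nS.
- by move: (f'_out _ nS) => /(can_inj f'K) fy; rewrite fy Sy in nS.
Qed.

Section Commutator.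
Variables (T : eqType) (g g' h h' : T -> T) (Sg Sh : pred T).
Hypotheses (gK : cancel g g') (g'K : cancel g' g) (hK : cancel h h') (h'K : cancel h' h)
  (g_out : forall y, ~~ Sg y -> g y = y) (h_out : forall y, ~~ Sh y -> h y = y).

Lemma commutator_fix (Z : pred T) : (forall y, Sg y -> Sh y -> Z y) ->
  forall y, ~~ Z y -> ~~ Z (g y) -> ~~ Z (h y) -> h' (g' (h (g y))) = y.
Proof.
move=> SZ y Zy Zgy Zhy.
have [g_in _ g'_out] := support_stable gK g'K g_out.
have [h_in _ h'_out] := support_stable hK h'K h_out.
have [Sgy | nSgy] := boolP (Sg y).
  have nSh : ~~ Sh (g y) by apply: contra Zgy; apply: SZ (g_in _ Sgy).
  by rewrite h_out // gK h'_out //; apply: contra Zy; apply: SZ.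
rewrite g_out //; have [Shy | nShy] := boolP (Sh y).
  by rewrite g'_out ?hK //; apply: contra Zhy => /SZ; apply; apply: h_in.
by rewrite h_out // g'_out // h'_out.
Qed.

Lemma commutator_cycle3 P : (forall y, Sg y -> Sh y -> y = P) -> Sg P -> Sh P ->
  g P != P -> h P != P ->
  [/\ h' (g' (h (g P))) = h' P, h' (g' (h (g (h' P)))) = g' P,
      h' (g' (h (g (g' P)))) = P & [/\ g' P != P, h' P != P & h' P != g' P]].
Proof.
move=> SP SgP ShP gP hP.
have [g_in g'_in g'_out] := support_stable gK g'K g_out.
have [h_in h'_in h'_out] := support_stable hK h'K h_out.
have g'P : g' P != P by apply: contra gP => /eqP e; rewrite -{1}e g'K.
have h'P : h' P != P by apply: contra hP => /eqP e; rewrite -{1}e h'K.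
have off y : y != P -> Sg y -> ~~ Sh y by move=> yP Sgy; apply: contra yP => /(SP _ Sgy)->.
have off' y : y != P -> Sh y -> ~~ Sg y by move=> yP Shy; apply: contra yP => /SP->.
have nShg'P : ~~ Sh (g' P) := off _ g'P (g'_in _ SgP).
have nSgh'P : ~~ Sg (h' P) := off' _ h'P (h'_in _ ShP).
have nShgP : ~~ Sh (g P) := off _ gP (g_in _ SgP).
have nSghP : ~~ Sg (h P) := off' _ hP (h_in _ ShP).
split.
- by rewrite (h_out nShgP) gK.
- by rewrite (g_out nSgh'P) h'K (h'_out _ nShg'P).
- by rewrite g'K (g'_out _ nSghP) hK.
split=> //; apply: contraNneq nShg'P => <-; exact: h'_in.
Qed.

End Commutator.

(** * Moves and combinations *)

Lemma third_neq_l (i j : 'I_3) : i != j -> third i j != i.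
Proof. by case: i j => [[|[|[|?]]] ?] [[|[|[|?]]] ?]; rewrite /third -!val_eqE //= inordK. Qed.

Lemma third_neq_r (i j : 'I_3) : i != j -> third i j != j.
Proof. by case: i j => [[|[|[|?]]] ?] [[|[|[|?]]] ?]; rewrite /third -!val_eqE //= inordK. Qed.

Lemma third_spec (i j x : 'I_3) : i != j -> x != i -> x != j -> x = third i j.
Proof.
case: i j x => [[|[|[|?]]] ?] [[|[|[|?]]] ?] [[|[|[|?]]] ?] //;
  by rewrite /third -!val_eqE => *; apply: val_inj; rewrite /= inordK.
Qed.

Lemma thirdC (i j : 'I_3) : i != j -> third j i = third i j.
Proof.
move=> ij; have ji : j != i by rewrite eq_sym.
by apply: third_spec; rewrite ?third_neq_l ?third_neq_r.
Qed.

Lemma third_thirdr (i j : 'I_3) : i != j -> third j (third i j) = i.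
Proof.
move=> ij; apply/esym/third_spec => //; rewrite eq_sym ?third_neq_l ?third_neq_r //.
Qed.

Lemma third_thirdl (i j : 'I_3) : i != j -> third (third i j) j = i.
Proof. by move=> ij; rewrite thirdC ?third_thirdr // eq_sym third_neq_r. Qed.

Section Moves.
Variable k : nat.
Implicit Types (p q : pos k) (m : move k) (w : seq (move k)) (y : pos k * 'I_3).

Lemma pos_eq3 (i j : 'I_3) p q : i != j ->
  p i = q i -> p j = q j -> p (third i j) = q (third i j) -> p = q.
Proof.
move=> ij pqi pqj pqt; apply/ffunP => x.
have [-> // | xi] := eqVneq x i; have [-> // | xj] := eqVneq x j.
by rewrite (third_spec ij xi xj).
Qed.

Lemma psi_l (i j : 'I_3) p : psi i j p i = rev_ord (p j).
Proof. by rewrite ffunE eqxx. Qed.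

Lemma psi_r (i j : 'I_3) p : i != j -> psi i j p j = p i.
Proof. by move=> ij; rewrite ffunE eq_sym (negbTE ij) eqxx. Qed.

Lemma psi_id (i j x : 'I_3) p : x != i -> x != j -> psi i j p x = p x.
Proof. by move=> xi xj; rewrite ffunE (negbTE xi) (negbTE xj). Qed.

Lemma psi_third (i j : 'I_3) p : i != j -> psi i j p (third i j) = p (third i j).
Proof. by move=> ij; rewrite psi_id ?third_neq_l ?third_neq_r. Qed.

Lemma psiK (i j : 'I_3) : i != j -> cancel (@psi k i j) (psi j i).
Proof.
move=> ij p; have ji : j != i by rewrite eq_sym.
apply: (pos_eq3 ij); first by rewrite !psi_r.
  by rewrite !psi_l rev_ordK.
by rewrite -(thirdC ij) psi_third // (thirdC ij) psi_third.
Qed.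

Definition inv_move m : move k := (m.1.2, m.1.1, m.2).

Lemma inv_moveK : involutive inv_move.
Proof. by case=> [[]]. Qed.

Lemma valid_inv_move m : valid_move (inv_move m) = valid_move m.
Proof. by rewrite /valid_move eq_sym. Qed.

Lemma in_layer_inv_move m : valid_move m -> in_layer (inv_move m) =1 in_layer m.
Proof. by case: m => [[i j] c] ij p; rewrite /in_layer /= thirdC. Qed.

Lemma in_layer_move_pos m p : valid_move m -> in_layer m (move_pos m p) = in_layer m p.
Proof.
by case: m => [[i j] c] ij; rewrite /move_pos; case: ifP => //=; rewrite /in_layer psi_third.
Qed.

Lemma move_X_fst m y : (move_X m y).1 = move_pos m y.1.
Proof. by rewrite /move_X /move_pos; case: ifP. Qed.

Lemma move_X_out m y : ~~ in_layer m y.1 -> move_X m y = y.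
Proof. by rewrite /move_X => /negbTE->. Qed.

Lemma move_XK m : valid_move m -> cancel (move_X m) (move_X (inv_move m)).
Proof.
move=> vm [p l]; rewrite /move_X /= in_layer_inv_move //.
case lay: (in_layer m p) => /=; last by rewrite lay.
have := in_layer_move_pos p vm; rewrite /move_pos lay => ->.
by case: m vm lay => [[i j] c] /= ij _; rewrite psiK // tpermC tpermK.
Qed.

Lemma move_posK m : valid_move m -> cancel (move_pos m) (move_pos (inv_move m)).
Proof. by move=> vm p; have /(congr1 fst) := move_XK vm (p, ord0); rewrite !move_X_fst. Qed.

Lemma move_posKV m : valid_move m -> cancel (move_pos (inv_move m)) (move_pos m).
Proof. by rewrite -valid_inv_move => /move_posK; rewrite inv_moveK. Qed.

Lemma act_X_cons m w y : act_X (m :: w) y = act_X w (move_X m y).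
Proof. by []. Qed.

Lemma act_X_fst w y : (act_X w y).1 = act_pos w y.1.
Proof. by elim: w y => //= m w IH y; rewrite IH move_X_fst. Qed.

Lemma act_X_cat w1 w2 y : act_X (w1 ++ w2) y = act_X w2 (act_X w1 y).
Proof. exact: foldl_cat. Qed.

Lemma act_pos_cat w1 w2 p : act_pos (w1 ++ w2) p = act_pos w2 (act_pos w1 p).
Proof. exact: foldl_cat. Qed.

Lemma combination_cat w1 w2 : combination (w1 ++ w2) = combination w1 && combination w2.
Proof. exact: all_cat. Qed.

Definition inv_comb w := rev (map inv_move w).

Lemma inv_combK : involutive inv_comb.
Proof. by move=> w; rewrite /inv_comb map_rev -map_comp revK (eq_map inv_moveK) map_id. Qed.

Lemma combination_inv w : combination (inv_comb w) = combination w.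
Proof. by rewrite /combination all_rev all_map; apply: eq_all => m; apply: valid_inv_move. Qed.

Lemma act_XK w : combination w -> cancel (act_X w) (act_X (inv_comb w)).
Proof.
elim: w => //= m w IH /andP[vm cw] y.
by rewrite /inv_comb /= rev_cons -cats1 act_X_cat IH //= move_XK.
Qed.

Lemma act_XKV w : combination w -> cancel (act_X (inv_comb w)) (act_X w).
Proof. by rewrite -combination_inv => /act_XK; rewrite inv_combK. Qed.

Lemma act_posK w : combination w -> cancel (act_pos w) (act_pos (inv_comb w)).
Proof. by move=> cw p; have /(congr1 fst) := act_XK cw (p, ord0); rewrite !act_X_fst. Qed.

Lemma act_posKV w : combination w -> cancel (act_pos (inv_comb w)) (act_pos w).
Proof. by rewrite -combination_inv => /act_posK; rewrite inv_combK. Qed.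

Definition fixes_off w (S : pred (pos k)) := forall y, ~~ S y.1 -> act_X w y = y.

Lemma fixes_off_pos w S : fixes_off w S -> forall p, ~~ S p -> act_pos w p = p.
Proof. by move=> Sw p Sp; have /(congr1 fst) := Sw (p, ord0) Sp; rewrite act_X_fst. Qed.

Lemma fixes_off_move m : fixes_off [:: m] (in_layer m).
Proof. by move=> y /move_X_out. Qed.

Lemma fixes_off_conj m w S : valid_move m -> fixes_off w S ->
  fixes_off (m :: w ++ [:: inv_move m]) (fun p => S (move_pos m p)).
Proof.
by move=> vm Sw y Sy; rewrite act_X_cons act_X_cat Sw ?move_X_fst //= move_XK.
Qed.

End Moves.

(** * Middle and extreme coordinates, frame positions *)

Section Frame.
Variable k : nat.
Implicit Types (x y : 'I_k) (p q : pos k).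

Definition middle x := x == rev_ord x.

Definition two_middle p := exists a b : 'I_3, [/\ a != b, middle (p a) & middle (p b)].

Definition extreme x := (val x == 0) || (val x == k.-1).

Lemma middleE x : middle x = ((val x).*2.+1 == k).
Proof. by rewrite /middle -val_eqE; case: x => v vk /=; apply/eqP/eqP; lia. Qed.

Lemma middle_extreme x : 2 <= k -> middle x -> ~~ extreme x.
Proof.
by move=> hk; rewrite middleE /extreme => /eqP e; apply/negP => /orP[] /eqP v; lia.
Qed.

Lemma middle_inj x y : middle x -> middle y -> x = y.
Proof. by rewrite !middleE => /eqP e1 /eqP e2; apply: val_inj; lia. Qed.

Lemma middle_odd x : middle x -> odd k.
Proof. by rewrite middleE => /eqP e; lia. Qed.

Lemma middle_half x : odd k -> middle x = (val x == k.-1./2).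
Proof. by rewrite middleE => ok; apply/eqP/eqP; lia. Qed.

Lemma middle_rev x : middle (rev_ord x) = middle x.
Proof. by rewrite /middle rev_ordK eq_sym. Qed.

Lemma extreme_rev x : extreme (rev_ord x) = extreme x.
Proof.
by rewrite /extreme; case: x => v vk /=; apply/idP/idP => /orP[] /eqP e; apply/orP; lia.
Qed.

Lemma extreme2 x y : extreme x -> extreme y -> y = x \/ y = rev_ord x.
Proof.
case: x y => [v vk] [u uk]; rewrite /extreme /= => /orP[] /eqP ev /orP[] /eqP eu;
  [left | right | right | left]; apply: val_inj => /=; lia.
Qed.

Lemma psi_tperm (i j x : 'I_3) p : i != j ->
  psi i j p x = p (tperm i j x) \/ psi i j p x = rev_ord (p (tperm i j x)).
Proof.
move=> ij; case: tpermP => [-> | -> | xi xj]; first by right; rewrite psi_l.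
  by left; rewrite psi_r.
by left; rewrite psi_id //; apply/eqP.
Qed.

Lemma extreme_psi (i j x : 'I_3) p : i != j ->
  extreme (psi i j p x) = extreme (p (tperm i j x)).
Proof. by move=> ij; case: (psi_tperm x p ij) => ->; rewrite ?extreme_rev. Qed.

Lemma middle_psi (i j x : 'I_3) p : i != j ->
  middle (psi i j p x) = middle (p (tperm i j x)).
Proof. by move=> ij; case: (psi_tperm x p ij) => ->; rewrite ?middle_rev. Qed.

Lemma move_pos_fixed (m : move k) p : valid_move m -> in_layer m p ->
  move_pos m p = p -> middle (p m.1.1) && middle (p m.1.2).
Proof.
case: m => [[i j] c] /= ij lay; rewrite /move_pos lay => e.
have /esym pi : psi i j p i = p i by rewrite e.
have /esym pj : psi i j p j = p j by rewrite e.
rewrite psi_l in pi; rewrite psi_r // in pj.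
by rewrite pj in pi; rewrite /middle pj -pi eqxx.
Qed.

Lemma external_move (m : move k) p : valid_move m -> external (move_pos m p) = external p.
Proof.
case: m => [[i j] c] ij; rewrite /move_pos; case: ifP => // _.
apply/set0Pn/set0Pn => -[x]; rewrite !inE -/(extreme _) => ex; exists (tperm i j x);
  by rewrite inE -/(extreme _) ?extreme_psi ?tpermK // -extreme_psi.
Qed.

Lemma external_act (w : seq (move k)) p :
  combination w -> external (act_pos w p) = external p.
Proof. by elim: w p => //= m w IH p /andP[vm cw]; rewrite IH // external_move. Qed.

Definition frame_at p (r : 'I_3) := extreme (p r) && [forall x, (x != r) ==> middle (p x)].

Lemma frameE p : 2 <= k -> odd k -> (p \in frame k) = [exists r, frame_at p r].
Proof.
move=> hk ok; rewrite inE; apply/andP/existsP => [[/cards1P[r Br] /forallP mid] |].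
  exists r; apply/andP; split; first by have := set11 r; rewrite -Br inE.
  apply/forallP => x; apply/implyP => xr; rewrite middle_half //.
  by apply: (implyP (mid x)); rewrite Br inE.
case=> r /andP[er /forallP mr].
have Bp : B p = [set r].
  apply/setP => x; rewrite !inE; have [-> // | xr] := eqVneq x r.
  by apply/negbTE/middle_extreme => //; apply: (implyP (mr x)).
split; first by rewrite Bp cards1.
apply/forallP => x; apply/implyP; rewrite Bp inE -middle_half //.
exact: (implyP (mr x)).
Qed.

Lemma frame_at_third p (a b : 'I_3) : 2 <= k -> external p -> a != b ->
  middle (p a) -> middle (p b) -> frame_at p (third a b).
Proof.
move=> hk /set0Pn[x]; rewrite inE -/(extreme _) => ex ab ma mb.
have [xa xb] : x != a /\ x != b by split; apply: contraTneq ex => ->; apply: middle_extreme.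
rewrite /frame_at -(third_spec ab xa xb) ex /=; apply/forallP => y; apply/implyP => yx.
have [-> // | ya] := eqVneq y a; have [-> // | yb] := eqVneq y b.
by rewrite (third_spec ab ya yb) (third_spec ab xa xb) eqxx in yx.
Qed.

Lemma frame_at_psi (i j r : 'I_3) p : i != j ->
  frame_at p r -> frame_at (psi i j p) (tperm i j r).
Proof.
move=> ij /andP[er /forallP mr]; rewrite /frame_at extreme_psi // tpermK er /=.
apply/forallP => x; apply/implyP => xr; rewrite middle_psi //; apply: (implyP (mr _)).
by apply: contra xr => /eqP <-; rewrite tpermK.
Qed.

Lemma framed_act (w : seq (move k)) p : combination w ->
  [exists r, frame_at p r] -> [exists r, frame_at (act_pos w p) r].
Proof.
elim: w p => //= -[[i j] c] w IH p /andP[ij cw] /existsP[r pr]; apply: IH => //.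
rewrite /move_pos; case: ifP => _; apply/existsP; last by exists r.
by exists (tperm i j r); apply: frame_at_psi.
Qed.

Lemma frame_at_reach p q (r r' : 'I_3) : frame_at p r -> frame_at q r' -> r != r' ->
  exists m : move k, valid_move m /\ move_pos m p = q.
Proof.
move=> /andP[ext_p /forallP mp] /andP[ext_q /forallP mq] rr'.
have r'r : r' != r by rewrite eq_sym.
set a := third r r'; have [ar ar'] : a != r /\ a != r' by rewrite third_neq_l ?third_neq_r.
have mpa := implyP (mp a) ar; have mpr' := implyP (mp r') r'r.
have mqa := implyP (mq a) ar'; have mqr := implyP (mq r) rr'.
have [e | e] := extreme2 ext_p ext_q.
- exists (r, r', p a); split=> //; rewrite /move_pos /in_layer /= eqxx.
  by apply: (pos_eq3 rr'); rewrite ?psi_l ?psi_r ?psi_third //; apply: middle_inj;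
    rewrite ?middle_rev.
- exists (r', r, p a); split=> //; rewrite /move_pos /in_layer /= thirdC // eqxx.
  by apply: (pos_eq3 rr'); rewrite ?psi_l ?psi_r ?psi_id //; apply: middle_inj.
Qed.

End Frame.

(** * Realizable permutations of a connectivity class *)

Section Realizable.
Variables (k : nat) (A : {set pos k}).

Definition realizes (s : {perm pos k}) (w : seq (move k)) :=
  [/\ combination w, {in A, act_pos w =1 s} & forall y, y.1 \notin A -> act_X w y = y].

Definition realizable (s : {perm pos k}) := perm_on A s /\ exists w, realizes s w.

Lemma realizable1 : realizable 1.
Proof. by split; [apply: perm_on1 | exists [::]; split=> // p _; rewrite perm1]. Qed.

Lemma realizableM s t : realizable s -> realizable t -> realizable (s * t).
Proof.
move=> [sA [w1 [c1 e1 f1]]] [tA [w2 [c2 e2 f2]]]; split; first exact: perm_onM.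
exists (w1 ++ w2); split; first by rewrite combination_cat c1.
  by move=> p pA; rewrite act_pos_cat e1 // e2 ?permM // perm_closed.
by move=> y yA; rewrite act_X_cat f1 // f2.
Qed.

Lemma realizableV s : realizable s -> realizable s^-1.
Proof.
move=> [sA [w [cw e f]]]; split; first exact: perm_onV.
exists (inv_comb w); split; first by rewrite combination_inv.
  move=> p pA; have s'pA : s^-1 p \in A by rewrite perm_closed // perm_onV.
  by rewrite -{1}(permKV s p) -e // act_posK.
by move=> y yA; rewrite -{1}(f _ yA) act_XK.
Qed.

End Realizable.

Definition adjacent k (p q : pos k) := exists m : move k, valid_move m /\ move_pos m p = q.

Section Orbit.
Variables (k : nat) (A : {set pos k}) (p0 : pos k).
Hypothesis orbitA : forall q, q \in A <-> exists w, combination w /\ act_pos w p0 = q.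

Lemma act_pos_in w p : combination w -> (act_pos w p \in A) = (p \in A).
Proof.
have closed v q : combination v -> q \in A -> act_pos v q \in A.
  move=> cv /orbitA[w0 [c0 <-]]; apply/orbitA; exists (w0 ++ v).
  by rewrite combination_cat c0 act_pos_cat.
move=> cw; apply/idP/idP; last exact: closed.
by move/(closed _ _ (etrans (combination_inv w) cw)); rewrite act_posK.
Qed.

Lemma orbit_path p q : p \in A -> q \in A -> exists w, combination w /\ act_pos w p = q.
Proof.
case/orbitA=> w1 [c1 <-] /orbitA[w2 [c2 <-]]; exists (inv_comb w1 ++ w2).
by rewrite combination_cat combination_inv c1 act_pos_cat act_posK.
Qed.

Lemma adjacent_in p q : p \in A -> adjacent p q -> q \in A.
Proof.
by move=> pA [m [vm <-]]; rewrite -[move_pos m p]/(act_pos [:: m] p) act_pos_in //= vm.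
Qed.

Lemma orbit_leave (S : {set pos k}) : S \subset A -> S != set0 -> ~~ (A \subset S) ->
  exists p q, [/\ p \in S, q \notin S & adjacent p q].
Proof.
move=> SA /set0Pn[p pS] /subsetPn[q qA qS].
have [w [cw pq]] := orbit_path (subsetP SA p pS) qA.
elim: w p pS cw pq => [p pS _ pq | m w IH p pS /andP[vm cw] pq].
  by move: qS; rewrite -pq pS.
have [mpS | mpS] := boolP (move_pos m p \in S); first exact: IH mpS cw pq.
by exists p, (move_pos m p); split=> //; exists m.
Qed.

Lemma realizable_commutator (wg wh : seq (move k)) (Sg Sh : pred (pos k)) P :
  P \in A -> combination wg -> combination wh -> fixes_off wg Sg -> fixes_off wh Sh ->
  (forall p, Sg p -> Sh p -> p = P) -> Sg P -> Sh P ->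
  act_pos wg P != P -> act_pos wh P != P ->
  let u := act_pos (inv_comb wh) P in let v := act_pos (inv_comb wg) P in
  [/\ u \in A, u != P, u != v & realizable A (cycle3 P u v)].
Proof.
move=> PA cg ch fg fh SP SgP ShP gP hP u v.
have [cP cu cv [vP uP uv]] := commutator_cycle3 (act_posK cg) (act_posKV cg)
  (act_posK ch) (act_posKV ch) (fixes_off_pos fg) (fixes_off_pos fh) SP SgP ShP gP hP.
have [uA vA] : u \in A /\ v \in A by rewrite !act_pos_in ?combination_inv.
have [Pu Pv] : P != u /\ P != v by rewrite ![P == _]eq_sym.
split=> //; split; first exact: perm_on_cycle3.
exists (wg ++ wh ++ inv_comb wg ++ inv_comb wh); split.
- by rewrite !combination_cat !combination_inv cg ch.
- move=> p pA; rewrite !act_pos_cat.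
  have [-> | pP] := eqVneq p P; first by rewrite cP cycle3_a.
  have [-> | pu] := eqVneq p u; first by rewrite cu cycle3_b.
  have [-> | pv] := eqVneq p v; first by rewrite cv cycle3_c.
  rewrite cycle3_id //; apply: (commutator_fix (act_posK cg) (act_posKV cg) (act_posK ch)
    (act_posKV ch) (fixes_off_pos fg) (fixes_off_pos fh) (Z := pred1 P)) => /=.
  + by move=> q Sgq Shq; rewrite (SP _ Sgq Shq).
  + exact: pP.
  + by apply: contra_neq pv => e; rewrite /v -e act_posK.
  + by apply: contra_neq pu => e; rewrite /u -e act_posK.
- move=> y yA; rewrite !act_X_cat.
  apply: (commutator_fix (act_XK cg) (act_XKV cg) (act_XK ch) (act_XKV ch)
    (Sg := fun y => Sg y.1) (Sh := fun y => Sh y.1) fg fh (Z := fun y => y.1 == P)).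
  + by move=> z Sgz Shz; rewrite (SP _ Sgz Shz).
  + by apply: contraNneq yA => ->.
  + by rewrite act_X_fst; apply: contraNneq yA => e; rewrite -(act_pos_in _ cg) e.
  + by rewrite act_X_fst; apply: contraNneq yA => e; rewrite -(act_pos_in _ ch) e.
Qed.

(* The commutator of the inverse of m with the conjugate of l by Xi. *)
Lemma realizable_cycle3_turns P m Xi l : P \in A ->
  valid_move m -> valid_move Xi -> valid_move l ->
  (forall p, in_layer m p -> in_layer l (move_pos Xi p) -> p = P) ->
  in_layer m P -> in_layer l (move_pos Xi P) ->
  move_pos m P != P -> move_pos l (move_pos Xi P) != move_pos Xi P ->
  exists u, [/\ u \in A, u != P, u != move_pos m P
             & realizable A (cycle3 P u (move_pos m P))].
Proof.
move=> PA vm vX vl SP SgP ShP mP lP.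
have vm' : valid_move (inv_move m) by rewrite valid_inv_move.
have fg : fixes_off [:: inv_move m] (in_layer m).
  by move=> y; rewrite -(in_layer_inv_move vm); apply: fixes_off_move.
have fh := fixes_off_conj vX (@fixes_off_move _ l).
have gP : move_pos (inv_move m) P != P.
  by apply: contra_neq mP => e; rewrite -{1}e move_posKV.
have hP : act_pos [:: Xi; l; inv_move Xi] P != P.
  by apply: contra_neq lP => /= e; rewrite -{2}e move_posKV.
have cg : combination [:: inv_move m] by rewrite /combination /= vm'.
have ch : combination [:: Xi; l; inv_move Xi] by rewrite /combination /= vX vl valid_inv_move vX.
have [uA uP] := realizable_commutator PA cg ch fg fh SP SgP ShP gP hP.
by rewrite /= inv_moveK => uv Ru; exists (act_pos (inv_comb [:: Xi; l; inv_move Xi]) P).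
Qed.

(* With t the third axis of m, Xi turns the layer [p i = P i] and l is a turn about t,
   chosen so that the conjugate of l by Xi meets the layer [p t = P t] of m only at P;
   the right choice depends on whether P j = P t.  Each remaining obstruction would make
   two coordinates of P middle. *)
Lemma realizable_cycle3_move P m : P \in A -> ~ two_middle P ->
  valid_move m -> move_pos m P != P ->
  exists u, [/\ u \in A, u != P, u != move_pos m P
             & realizable A (cycle3 P u (move_pos m P))].
Proof.
move=> PA nmP vm mP.
have layP : in_layer m P by apply: contraNT mP => /negbTE nlay; rewrite /move_pos nlay.
have two_mid a b : a != b -> middle (P a) -> middle (P b) -> False.
  by move=> ab ma mb; apply: nmP; exists a, b.
case: m vm mP layP => [[i j] c] vm mP layP.
have ij : i != j := vm.
have Pc : P (third i j) = c := eqP layP.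
subst c.
set t := third i j in mP *.
have [ti tj] : t != i /\ t != j by rewrite third_neq_l ?third_neq_r.
have [it jt] : i != t /\ j != t by rewrite ![_ == t]eq_sym.
have turns Xi l := @realizable_cycle3_turns P (i, j, P t) Xi l PA ij.
have [Pjt | Pjt] := eqVneq (P j) (P t).
- pose Xi : move k := ((t, j), P i); pose l : move k := ((i, j), rev_ord (P j)).
  have XiE p : move_pos Xi p = if p i == P i then psi t j p else p.
    by rewrite /move_pos /in_layer /= third_thirdl.
  apply: (turns Xi l) => //; rewrite /valid_move /in_layer /= -/t ?XiE ?eqxx ?psi_l //.
  + move=> p /eqP pt; rewrite XiE; case: ifP => [/eqP pi | _] /eqP; first rewrite psi_l.
      by move/rev_ord_inj => pj; apply: (pos_eq3 ij).
    move=> ptj; have mt : middle (P t) by rewrite /middle -{1}pt ptj Pjt.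
    by case: (two_mid _ _ jt _ mt); rewrite Pjt.
  + apply/negP => /eqP /move_pos_fixed /= /(_ ij); rewrite /in_layer /= -/t psi_l eqxx.
    by rewrite psi_id // psi_r // => /(_ isT) /andP[]; apply: two_mid it.
- pose Xi : move k := ((j, t), P i); pose l : move k := ((i, j), P j).
  have XiE p : move_pos Xi p = if p i == P i then psi j t p else p.
    by rewrite /move_pos /in_layer /= third_thirdr.
  apply: (turns Xi l) => //; rewrite /valid_move /in_layer /= -/t ?XiE ?eqxx ?psi_r //.
  + move=> p /eqP pt; rewrite XiE; case: ifP => [/eqP pi | _] /eqP; first rewrite psi_r //.
      by move=> pj; apply: (pos_eq3 ij).
    by move=> ptj; move: Pjt; rewrite -ptj pt eqxx.
  + apply/negP => /eqP /move_pos_fixed /= /(_ ij); rewrite /in_layer /= -/t psi_r // eqxx.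
    by rewrite psi_id // psi_l middle_rev => /(_ isT) /andP[]; apply: two_mid it.
Qed.

Lemma orbit_frame P : 2 <= k -> external p0 -> P \in A -> two_middle P -> A = frame k.
Proof.
move=> hk p0_ext PA [a [b [ab ma mb]]]; have ok := middle_odd ma.
have Pext : external P.
  by have [w [cw <-]] := iffLR (orbitA P) PA; rewrite external_act.
have Pr := frame_at_third hk Pext ab ma mb; set r := third a b in Pr.
apply/setP => Q; rewrite frameE //; apply/idP/existsP => [QA | [r' Qr']].
  have [w [cw <-]] := orbit_path PA QA.
  by apply/existsP; apply: framed_act => //; apply/existsP; exists r.
have reachA R s : R \in A -> frame_at R s -> s != r' -> Q \in A.
  move=> RA Rs sr'; have [m [vm <-]] := frame_at_reach Rs Qr' sr'.
  by apply: (adjacent_in RA); exists m.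
have [rr' | /(reachA _ _ PA Pr) //] := eqVneq r r'.
have ar : a != r by rewrite eq_sym third_neq_l.
have RA : move_pos (a, r, P (third a r)) P \in A.
  by apply: (adjacent_in PA); exists (a, r, P (third a r)).
apply: (reachA _ a RA); last by rewrite -rr'.
by rewrite /move_pos /in_layer /= eqxx -{2}(tpermR a r); apply: frame_at_psi.
Qed.

End Orbit.

Theorem mainTheorem5 (k : nat) (hk : 2 <= k) (A : {set pos k})
  (hA : conn_class A) (hframe : odd k -> A != frame k)
  (pi : {perm pos k}) (hpi : perm_on A pi) (heven : ~~ odd_perm pi) :
  exists g : seq (move k), combination g /\
    (forall p, p \in A -> act_pos g p = pi p) /\
    (forall q (l : 'I_3), external q -> q \notin A -> l \in B q ->
       act_X g (q, l) = (q, l)).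
Proof.
case: hA => p0 [p0_ext orbitA].
have no_two_middle P : P \in A -> ~ two_middle P.
  move=> PA two; have [a [_ [_ ma _]]] := two.
  by move/eqP: (hframe (middle_odd ma)); apply; apply: (orbit_frame orbitA hk p0_ext PA two).
have [_ [g [cg gA gfix]]] : realizable A pi.
  apply: (alt_in_connected (@realizable1 _ A) (@realizableM _ A) (@realizableV _ A)
    (A := A) (E := @adjacent k)) => //.
  - exact: adjacent_in orbitA.
  - exact: orbit_leave orbitA.
  - move=> P Q PA [m [vm <-]]; rewrite eq_sym => mP.
    exact (realizable_cycle3_move orbitA PA (no_two_middle P PA) vm mP).
by exists g; split=> //; split=> // q l _ qA _; apply: gfix.
Qed.
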